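(* Consider the two-unicast wireline network (''butterfly network 2'') with nodes $\mathsf{S}_1,\mathsf{S}_2,\mathsf{M}_1,\mathsf{M}_2,\mathsf{D}_1,\mathsf{D}_2$ and seven directed edges: edge 1 from $\mathsf{S}_1$ to $\mathsf{M}_1$, edge 2 from $\mathsf{S}_2$ to $\mathsf{M}_1$, edge 3 from $\mathsf{M}_1$ to $\mathsf{M}_2$, edge 4 from $\mathsf{S}_1$ to $\mathsf{D}_1$, edge 5 from $\mathsf{S}_2$ to $\mathsf{D}_2$, edge 6 from $\mathsf{M}_2$ to $\mathsf{D}_2$, edge 7 from $\mathsf{M}_2$ to $\mathsf{D}_1$, where edge $i$ has capacity $\mathsf{C}_i\ge0$. Then every nonnegative rate pair $(R_1,R_2)$ satisfying $$R_1\le \min\{\mathsf{C}_1,\mathsf{C}_7\}+\min\{R_1,\mathsf{C}_4\},\quad R_2\le \min\{\mathsf{C}_2,\mathsf{C}_6\}+\min\{R_2,\mathsf{C}_5\},$$ $$R_1+R_2\le \mathsf{C}_3+\min\{R_2,\mathsf{C}_5\}+\min\{R_1,\mathsf{C}_4\}$$ is achievable (without security constraints).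
   Context: Network model: a directed acyclic graph; each edge $e$ is a noiseless orthogonal channel of capacity $\mathsf{C}_e$ carrying symbols over $\mathbb{F}_q$; over $n$ channel uses edge $e$ carries $X_e^n$, received as $Y_e^n=X_e^n$. Source $\mathsf{S}_i$ has message $W_i$ (uniform, $q$-ary entropy $nR_i$, $W_1,W_2$ independent) to be decoded at $\mathsf{D}_i$. A rate pair is achievable if for some block length $n$ there are encoding functions—an edge leaving $\mathsf{S}_i$ carries a function of $W_i$, any other edge a function of the symbols received on the incoming edges of its tail—and decoders at $\mathsf{D}_j$ (functions of the symbols on its incoming edges) recovering $W_j$ with vanishing error probability, $j=1,2$. *)

From mathcomp Require Import all_boot.
From Stdlib Require Import Reals.

Set Implicit Arguments.
Unset Strict Implicit.
Unset Printing Implicit Defensive.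

Definition floorR (x : R) : nat := Z.to_nat (Int_part x).

(* number of q-ary symbols an edge of capacity c carries over n channel uses *)
Definition nsym (n : nat) (c : R) : nat := floorR (INR n * c).

Definition blk (q n : nat) (c : R) : Type := (nsym n c).-tuple 'I_q.

Definition prime_power (q : nat) : Prop :=
  exists p k : nat, prime p /\ (0 < k)%N /\ q = (p ^ k)%N.

(* Achievability for butterfly network 2:
   edges 1: S1->M1, 2: S2->M1, 3: M1->M2, 4: S1->D1, 5: S2->D2,
         6: M2->D2, 7: M2->D1.
   (R1,R2) is achievable if for every eps > 0 there is a block length n and a
   code with message sets of sizes M1, M2 (log_q M_i >= n (R_i - eps)),
   edge encoding functions respecting the topology, and decoders at D1, D2,
   whose error probability (messages uniform and independent) is <= eps. *)
Definition bf2_achievable (q : nat) (C1 C2 C3 C4 C5 C6 C7 R1 R2 : R) : Prop :=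
  forall eps : R, (0 < eps)%R ->
  exists n M1 M2 : nat,
    (0 < n)%N /\
    (Rpower (INR q) (INR n * (R1 - eps)) <= INR M1)%R /\
    (Rpower (INR q) (INR n * (R2 - eps)) <= INR M2)%R /\
    exists (f1 : 'I_M1 -> blk q n C1) (f4 : 'I_M1 -> blk q n C4)
           (f2 : 'I_M2 -> blk q n C2) (f5 : 'I_M2 -> blk q n C5)
           (f3 : blk q n C1 -> blk q n C2 -> blk q n C3)
           (f6 : blk q n C3 -> blk q n C6)
           (f7 : blk q n C3 -> blk q n C7)
           (g1 : blk q n C4 -> blk q n C7 -> 'I_M1)
           (g2 : blk q n C5 -> blk q n C6 -> 'I_M2),
      (INR #|[set w : 'I_M1 * 'I_M2 |
               (g1 (f4 w.1) (f7 (f3 (f1 w.1) (f2 w.2))) != w.1)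
            || (g2 (f5 w.2) (f6 (f3 (f1 w.1) (f2 w.2))) != w.2)]|
         <= eps * INR (M1 * M2))%R.

(** Split each message into a direct part, sent on the private edge 4 (resp. 5),
    and a routed part of rate at most [min(C1, C7)] (resp. [min(C2, C6)]). The two
    routed parts are concatenated on the shared edge 3, and each branch leaving
    [M2] forwards the half wanted at its destination; the sum-rate condition is
    exactly what makes the concatenation fit on edge 3. This gives a zero-error
    code, and taking integer parts of [n] times the rates loses less than two
    symbols per message, which is below [n * eps] for large [n]. *)

From mathcomp Require Import all_boot.
From Stdlib Require Import ZArith Reals Lra Lia.

Set Implicit Arguments.
Unset Strict Implicit.

Lemma prime_power_gt0 q : prime_power q -> 0 < q.
Proof.
move=> [p [k [p_pr [_ ->]]]]; apply/ltP/Nat.neq_0_lt_0/Nat.pow_nonzero.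
by have /ltP := prime_gt0 p_pr; lia.
Qed.

Lemma floorR_spec x : (0 <= x)%R -> (INR (floorR x) <= x < INR (floorR x) + 1)%R.
Proof.
move=> x_ge0; rewrite /floorR.
have [lb ub] := base_Int_part x.
have Int_part_ge0 : (0 <= Int_part x)%Z.
  have : (IZR (-1) < IZR (Int_part x))%R by rewrite /=; lra.
  by move/lt_IZR; lia.
by rewrite INR_IZR_INZ Z2Nat.id //; lra.
Qed.

Lemma floorR_le x y : (0 <= x)%R -> (x <= y)%R -> floorR x <= floorR y.
Proof.
move=> x_ge0 le_xy.
have [fx_le _] := floorR_spec x_ge0.
have [_ fy_gt] := floorR_spec (Rle_trans _ _ _ x_ge0 le_xy).
have : (INR (floorR x) < INR (floorR y + 1))%R by rewrite plus_INR /=; lra.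
by move/INR_lt/ltP; rewrite addn1 ltnS.
Qed.

Lemma floorR_mulr_le n x y :
  (0 <= x)%R -> (x <= y)%R -> floorR (INR n * x) <= floorR (INR n * y).
Proof.
move=> x_ge0 le_xy; apply: floorR_le.
  exact: Rmult_le_pos (pos_INR n) x_ge0.
exact: Rmult_le_compat_l (pos_INR n) le_xy.
Qed.

Lemma floorR_add x y :
  (0 <= x)%R -> (0 <= y)%R -> floorR x + floorR y <= floorR (x + y).
Proof.
move=> x_ge0 y_ge0.
have [fx_le _] := floorR_spec x_ge0.
have [fy_le _] := floorR_spec y_ge0.
have [_ fxy_gt] := floorR_spec (Rplus_le_le_0_compat _ _ x_ge0 y_ge0).
have : (INR (floorR x + floorR y) < INR (floorR (x + y) + 1))%R
  by rewrite !plus_INR /=; lra.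
by move/INR_lt/ltP; rewrite addn1 ltnS.
Qed.

Lemma floorR_split_rate n eps R a : (0 <= a <= R)%R -> (2 <= INR n * eps)%R ->
  (INR n * (R - eps) <= INR (floorR (INR n * a) + floorR (INR n * (R - a))))%R.
Proof.
move=> [a_ge0 le_aR] large_n.
have [_ fa_gt] := floorR_spec (Rmult_le_pos _ _ (pos_INR n) a_ge0).
have b_ge0 : (0 <= R - a)%R by lra.
have [_ fb_gt] := floorR_spec (Rmult_le_pos _ _ (pos_INR n) b_ge0).
rewrite plus_INR; lra.
Qed.

Lemma INR_mul_unbounded eps c : (0 < eps)%R -> exists n, 0 < n /\ (c <= INR n * eps)%R.
Proof.
move=> eps_gt0.
have [_ fc_gt] := floorR_spec (Rmax_l 0 (c / eps)).
exists (floorR (Rmax 0 (c / eps))).+1; split=> //.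
have c_eq : (c = c / eps * eps)%R by field; lra.
have := Rmax_r 0 (c / eps); rewrite S_INR; nra.
Qed.

Lemma INR_expn a b : INR (expn a b) = (INR a ^ b)%R.
Proof. by elim: b => [|b IHb] //=; rewrite expnS mult_INR IHb. Qed.

Lemma Rpower_le_INR_expn q k x : 0 < q -> (x <= INR k)%R ->
  (Rpower (INR q) x <= INR (expn q k))%R.
Proof.
move=> q_gt0 le_xk.
have q_ge1 : (1 <= INR q)%R by apply: (le_INR 1); apply/leP.
by rewrite INR_expn -Rpower_pow; [apply: Rle_Rpower | lra].
Qed.

Section Resize.

Variables (T : Type) (x0 : T).

Definition resize m (s : seq T) : m.-tuple T := [tuple nth x0 s i | i < m].

Lemma nth_resize m s i : nth x0 (resize m s) i = if i < m then nth x0 s i else x0.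
Proof.
case: ltnP => [lt_im | le_mi].
  by rewrite -(tnth_nth x0 _ (Ordinal lt_im)) tnth_mktuple.
by rewrite nth_default // size_tuple.
Qed.

Lemma eq_resize m s s' :
  (forall i, i < m -> nth x0 s i = nth x0 s' i) -> resize m s = resize m s'.
Proof. by move=> eq_ss'; apply: eq_from_tnth => i; rewrite !tnth_mktuple eq_ss'. Qed.

Lemma resize_tuple m (t : m.-tuple T) : resize m t = t.
Proof. by apply: eq_from_tnth => i; rewrite tnth_mktuple (tnth_nth x0). Qed.

Lemma resize_resize m k s : m <= k -> resize m (resize k s) = resize m s.
Proof.
by move=> le_mk; apply: eq_resize => i lt_im; rewrite nth_resize (leq_trans lt_im).
Qed.

Lemma resize_cat m s1 s2 : m <= size s1 -> resize m (s1 ++ s2) = resize m s1.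
Proof.
by move=> le_m1; apply: eq_resize => i lt_im; rewrite nth_cat (leq_trans lt_im).
Qed.

Lemma resize_drop_resize m k l s :
  k + m <= l -> resize m (drop k (resize l s)) = resize m (drop k s).
Proof.
move=> le_kml; apply: eq_resize => i lt_im.
by rewrite !nth_drop nth_resize (leq_trans _ le_kml) // ltn_add2l.
Qed.

End Resize.

Arguments resize : simpl never.

Section ButterflyCode.

Variables (T : finType) (x0 : T).
Variables (d1 r1 d2 r2 c1 c2 c3 c4 c5 c6 c7 : nat).
Hypotheses (le_d1_c4 : d1 <= c4) (le_r1_c1 : r1 <= c1) (le_r1_c7 : r1 <= c7).
Hypotheses (le_d2_c5 : d2 <= c5) (le_r2_c2 : r2 <= c2) (le_r2_c6 : r2 <= c6).
Hypothesis le_r12_c3 : r1 + r2 <= c3.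

Local Notation resize := (resize x0).

Definition msg d r : finType := (d.-tuple T * r.-tuple T)%type.

Lemma card_msg d r : #|msg d r| = expn #|T| (d + r).
Proof. by rewrite card_prod !card_tuple expnD. Qed.

Definition mix (b1 b2 : seq T) : c3.-tuple T := resize c3 (resize r1 b1 ++ resize r2 b2).

Definition unmix1 (b3 : seq T) : c7.-tuple T := resize c7 b3.

Definition unmix2 (b3 : seq T) : c6.-tuple T := resize c6 (drop r1 b3).

Definition direct_part d r c (w : 'I_#|msg d r|) : c.-tuple T := resize c (enum_val w).1.

Definition routed_part d r c (w : 'I_#|msg d r|) : c.-tuple T := resize c (enum_val w).2.

Definition decode d r (direct routed : seq T) : 'I_#|msg d r| :=
  enum_rank ((resize d direct, resize r routed) : msg d r).

Lemma decode1_mix (w1 : 'I_#|msg d1 r1|) (b2 : seq T) :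
  decode d1 r1 (direct_part c4 w1) (unmix1 (mix (routed_part c1 w1) b2)) = w1.
Proof.
rewrite /decode /direct_part /routed_part /unmix1 /mix !resize_resize //.
  rewrite resize_cat ?size_tuple // resize_resize // !resize_tuple.
  by rewrite -surjective_pairing enum_valK.
exact: leq_trans (leq_addr _ _) le_r12_c3.
Qed.

Lemma decode2_mix (w2 : 'I_#|msg d2 r2|) (b1 : seq T) :
  decode d2 r2 (direct_part c5 w2) (unmix2 (mix b1 (routed_part c2 w2))) = w2.
Proof.
rewrite /decode /direct_part /routed_part /unmix2 /mix !resize_resize //.
rewrite resize_drop_resize // drop_size_cat ?size_tuple //.
by rewrite resize_resize // !resize_tuple -surjective_pairing enum_valK.
Qed.

End ButterflyCode.

Lemma bf2_achievable_of_routing q C1 C2 C3 C4 C5 C6 C7 R1 R2 : 0 < q ->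
  (forall eps, (0 < eps)%R -> exists n d1 r1 d2 r2 : nat,
    [/\ 0 < n,
        [/\ d1 <= nsym n C4, r1 <= nsym n C1, r1 <= nsym n C7 & r1 + r2 <= nsym n C3],
        [/\ d2 <= nsym n C5, r2 <= nsym n C2 & r2 <= nsym n C6],
        (INR n * (R1 - eps) <= INR (d1 + r1))%R
      & (INR n * (R2 - eps) <= INR (d2 + r2))%R]) ->
  bf2_achievable q C1 C2 C3 C4 C5 C6 C7 R1 R2.
Proof.
case: q => // q _ routing eps eps_gt0.
have [n [d1 [r1 [d2 [r2 [n_gt0 [h4 h1 h7 h3] [h5 h2 h6] rate1 rate2]]]]]] :=
  routing eps eps_gt0.
pose x0 : 'I_q.+1 := ord0.
exists n, #|msg 'I_q.+1 d1 r1|, #|msg 'I_q.+1 d2 r2|.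
split=> //; split; first by rewrite card_msg card_ord; apply: Rpower_le_INR_expn.
split; first by rewrite card_msg card_ord; apply: Rpower_le_INR_expn.
exists (routed_part x0 _), (direct_part x0 _), (routed_part x0 _), (direct_part x0 _).
exists (mix x0 r1 r2 _), (unmix2 x0 r1 _), (unmix1 x0 _), (decode x0 _ _), (decode x0 _ _).
match goal with |- context [finset ?P] => have -> : finset P = set0 end.
  apply/setP=> -[w1 w2]; rewrite !inE /=.
  by rewrite decode1_mix // decode2_mix // !eqxx.
by rewrite cards0; apply: Rmult_le_pos (Rlt_le _ _ eps_gt0) (pos_INR _).
Qed.

Theorem theorem7 (q : nat) (Hq : prime_power q)
  (C1 C2 C3 C4 C5 C6 C7 R1 R2 : R)
  (H1 : (0 <= C1)%R) (H2 : (0 <= C2)%R) (H3 : (0 <= C3)%R) (H4 : (0 <= C4)%R)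
  (H5 : (0 <= C5)%R) (H6 : (0 <= C6)%R) (H7 : (0 <= C7)%R)
  (HR1 : (0 <= R1)%R) (HR2 : (0 <= R2)%R)
  (B1 : (R1 <= Rmin C1 C7 + Rmin R1 C4)%R)
  (B2 : (R2 <= Rmin C2 C6 + Rmin R2 C5)%R)
  (B3 : (R1 + R2 <= C3 + Rmin R2 C5 + Rmin R1 C4)%R) :
  bf2_achievable q C1 C2 C3 C4 C5 C6 C7 R1 R2.
Proof.
apply: (bf2_achievable_of_routing (prime_power_gt0 Hq)) => eps eps_gt0.
have [n [n_gt0 large_n]] := INR_mul_unbounded 2 eps_gt0.
have [a1_ge0 a2_ge0] : (0 <= Rmin R1 C4 /\ 0 <= Rmin R2 C5)%R.
  by split; apply: Rmin_glb.
move: (Rmin_l R1 C4) (Rmin_r R1 C4) (Rmin_l R2 C5) (Rmin_r R2 C5)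
  => a1_le_R1 a1_le_C4 a2_le_R2 a2_le_C5.
move: (Rmin_l C1 C7) (Rmin_r C1 C7) (Rmin_l C2 C6) (Rmin_r C2 C6)
  => m17_le_C1 m17_le_C7 m26_le_C2 m26_le_C6.
have [routed1_ge0 routed2_ge0] : (0 <= R1 - Rmin R1 C4 /\ 0 <= R2 - Rmin R2 C5)%R.
  by split; lra.
exists n, (floorR (INR n * Rmin R1 C4)), (floorR (INR n * (R1 - Rmin R1 C4))).
exists (floorR (INR n * Rmin R2 C5)), (floorR (INR n * (R2 - Rmin R2 C5))).
split=> //; try (split; apply: floorR_mulr_le => //; lra).
- split; try (apply: floorR_mulr_le => //; lra).
  apply: leq_trans (floorR_add (Rmult_le_pos _ _ (pos_INR n) routed1_ge0)
                               (Rmult_le_pos _ _ (pos_INR n) routed2_ge0)) _.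
  by rewrite -Rmult_plus_distr_l; apply: floorR_mulr_le; lra.
- by apply: floorR_split_rate; lra.
- by apply: floorR_split_rate; lra.
Qed.
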